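(* There exists a function $f : \mathbb{N}^{\mathbb{N}} \to \mathbb{N}$ such that Player I has a winning strategy in $\Gamma(f)$, and $C \cap \{f \ge r\}$ is uncountable for each $r \in \mathbb{R}$ and each Cantor set $C \subseteq \mathbb{N}^{\mathbb{N}}$.
   Context: Here $X = \mathbb{N}^{\mathbb{N}}$ (the branches of the full tree of finite sequences of natural numbers) with the product topology. A Cantor set is a subset homeomorphic to the middle-thirds Cantor set. $\{f \ge r\} = \{x : f(x) \ge r\}$. The game $\Gamma(f)$: Player I and Player II alternate, Player I moving first; Player I plays natural numbers $x_0, x_1, \dots$, and after each move $x_t$ Player II plays a real number $v_t$. Player II wins the run iff $f(x_0,x_1,\dots) = \limsup_{t\to\infty} v_t$; otherwise Player I wins. *)

From HB Require Import structures.
From mathcomp Require Import all_boot all_order all_algebra.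
From mathcomp Require Import all_classical all_reals all_analysis.
From mathcomp Require Import Rstruct Rstruct_topology.
Set Implicit Arguments. Unset Strict Implicit. Unset Printing Implicit Defensive.
Import Order.TTheory GRing.Theory Num.Theory.
Local Open Scope classical_set_scope.
Local Open Scope ring_scope.

Notation RR := Rdefinitions.R.

(* Baire space N^N: [nat -> nat] with the product topology of discrete [nat]
   ([{ptws nat -> nat}] = prod_topology, convertible to nat -> nat). *)
Notation baire := {ptws nat -> nat}.

Fixpoint cantor_stage (n : nat) : set RR :=
  match n with
  | 0 => `[0, 1]%classic
  | n.+1 => ((fun x : RR => x / 3) @` cantor_stage n) `|`
            ((fun x : RR => (x + 2) / 3) @` cantor_stage n)
  end.

Definition middle_thirds_cantor : set RR := \bigcap_(n in setT) cantor_stage n.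

Definition homeomorphic_sets (T U : topologicalType) (A : set T) (B : set U) :=
  exists (h : T -> U) (g : U -> T),
    [/\ (forall x, A x -> B (h x)), (forall y, B y -> A (g y)),
        (forall x, A x -> g (h x) = x) & (forall y, B y -> h (g y) = y)] /\
    {within A, continuous h} /\ {within B, continuous g}.

Definition is_cantor_set (C : set baire) :=
  @homeomorphic_sets baire RR C middle_thirds_cantor.

(* A strategy for Player I chooses x_t from the moves
   v_0, ..., v_{t-1} of Player II played so far (Player I's own earlier moves
   are determined by these). *)
Definition strategyI := seq RR -> nat.

Definition play_I (sigma : strategyI) (v : nat -> RR) : baire :=
  fun t => sigma (mkseq v t).

Definition II_wins_run (f : baire -> nat) (x : baire) (v : nat -> RR) : Prop :=
  ((f x)%:R : RR)%:E = limn_esup (fun t => (v t)%:E).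

(* Player I has a winning strategy: against every sequence of replies of
   Player II (equivalently every strategy of II), Player I wins. *)
Definition I_has_winning_strategy (f : baire -> nat) : Prop :=
  exists sigma : strategyI, forall v : nat -> RR,
    ~ II_wins_run f (play_I sigma v) v.

From mathcomp Require Import all_boot all_order all_algebra.
From mathcomp Require Import all_classical all_reals all_analysis.
From mathcomp Require Import Rstruct Rstruct_topology.
From mathcomp Require Import wochoice lra.
Import Order.TTheory GRing.Theory Num.Theory.
Local Open Scope classical_set_scope.
Local Open Scope ring_scope.

(* Player I plays [x_(t+1) = round(v_t) + 1] ([shadow]).  If Player II wins a
   run, the upper limit of her moves is the natural number [f x], hence the
   run [x] has upper limit [f x + 1]; so Player I wins [Gamma f] as soon as
   [f x + 1] never equals the upper limit of [x] ([shadow_wins]).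
   For the second property we build, by a Bernstein-type transfinite
   construction, a labelling of Baire space in which every Cantor set has
   continuum many points of each label; raising the label by one where it
   would equal [limsup x - 1] gives the payoff [f]. *)

Lemma limn_esup_lt_ev (R : realType) (u : (\bar R)^nat) (a : \bar R) :
  (limn_esup u < a)%E -> exists N, forall t, (N <= t)%N -> (u t < a)%E.
Proof.
rewrite limn_esup_lim (cvg_lim _ (@cvg_esups_inf _ u)) //.
move=> /ereal_inf_lt [_ [N _ <-]] supN_lt; exists N => t Nt.
by apply: le_lt_trans supN_lt; apply: ereal_sup_ubound; exists t.
Qed.

Lemma lt_limn_esup_freq (R : realType) (u : (\bar R)^nat) (a : \bar R) :
  (a < limn_esup u)%E -> forall N, exists2 t, (N <= t)%N & (a < u t)%E.
Proof.
rewrite limn_esup_lim (cvg_lim _ (@cvg_esups_inf _ u)) // => a_lt N.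
have : (a < esups u N)%E.
  by apply: (lt_le_trans a_lt); apply: ereal_inf_lbound; exists N.
by move=> /ereal_sup_gt [_ [t Nt <-]] a_lt_ut; exists t.
Qed.

Definition is_nat_limsup (x : nat -> nat) (m : nat) : Prop :=
  (exists N, forall t, (N <= t)%N -> (x t <= m)%N) /\
  (forall N, exists2 t, (N <= t)%N & (m <= x t)%N).

Lemma is_nat_limsup_uniq x m m' : is_nat_limsup x m -> is_nat_limsup x m' -> m = m'.
Proof.
move=> [[N le_m] ge_m] [[N' le_m'] ge_m'].
apply/eqP; rewrite eqn_leq; apply/andP; split.
- by have [t Nt mt] := ge_m N'; apply: leq_trans mt (le_m' t Nt).
- by have [t Nt mt] := ge_m' N; apply: leq_trans mt (le_m t Nt).
Qed.

(* The finite upper limit of [x] (an arbitrary value, 0, if there is none). *)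
Definition nat_limsup (x : nat -> nat) : nat :=
  if pselect (exists m, is_nat_limsup x m) is left h then projT1 (cid h) else 0%N.

Lemma nat_limsupE x m : is_nat_limsup x m -> nat_limsup x = m.
Proof.
move=> xm; rewrite /nat_limsup; case: pselect => [h|]; last by case; exists m.
by case: (cid h) => m' /= xm'; apply: is_nat_limsup_uniq xm' xm.
Qed.

(* Player I's strategy: answer Player II's last real move [v] by the natural
   number [round v + 1], i.e. [Num.truncn (v + 3/2)]; the first move is 0. *)
Definition shadow : strategyI := fun s =>
  if s is [::] then 0%N else Num.truncn (last 0 s + 3/2).

Lemma play_shadowS v t : play_I shadow v t.+1 = Num.truncn (v t + 3/2).
Proof.
rewrite /play_I /shadow /mkseq -[t.+1]addn1 iotaD map_cat /=.
by case: (map v (iota 0 t)) => [|a s]; rewrite //= last_cat.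
Qed.

Lemma shadow_limsup (v : nat -> RR) (n : nat) :
  limn_esup (fun t => (v t)%:E) = (n%:R)%:E ->
  nat_limsup (play_I shadow v) = n.+1.
Proof.
move=> vn; apply: nat_limsupE; split.
- have : (limn_esup (fun t => (v t)%:E) < (n%:R + 1/2)%:E)%E.
    by rewrite vn lte_fin ltrDl; lra.
  move=> /limn_esup_lt_ev [N vN]; exists N.+1 => -[//|t] /vN.
  rewrite lte_fin play_shadowS truncn_le_nat -[(n.+2)%:R]natr1 -[(n.+1)%:R]natr1.
  lra.
- have : ((n%:R - 1/2)%:E < limn_esup (fun t => (v t)%:E))%E.
    by rewrite vn lte_fin; lra.
  move=> /lt_limn_esup_freq vfreq N; have [t Nt] := vfreq N.
  rewrite lte_fin => vt; exists t.+1; first exact: leqW.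
  by rewrite play_shadowS truncn_gt_nat -[(n.+1)%:R]natr1; lra.
Qed.

Lemma shadow_wins (f : baire -> nat) :
  (forall x, (f x).+1 <> nat_limsup x) -> I_has_winning_strategy f.
Proof. by move=> f_avoid; exists shadow => v /esym/shadow_limsup/esym/f_avoid. Qed.

(* Binary sequences are mapped onto the middle-thirds Cantor set through
   their ternary expansions with digits 0 and 2.  [ternary s] is the value of
   the finite expansion [0.(2 s_0)(2 s_1)...] in base 3. *)
Fixpoint ternary (s : seq bool) : RR :=
  if s is c :: s' then (ternary s' + 2 * (c : nat)%:R) / 3 else 0.

Definition prefix (b : nat -> bool) (n : nat) : seq bool := mkseq b n.
Definition shift (b : nat -> bool) : nat -> bool := fun k => b k.+1.

Lemma prefixS b n : prefix b n.+1 = b 0%N :: prefix (shift b) n.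
Proof. by rewrite /prefix /mkseq /= -[1%N]addn0 iotaDl -map_comp. Qed.

Lemma bit_bound (c : bool) : 0 <= ((c : nat)%:R : RR) <= 1.
Proof. by case: c; rewrite /= ?lexx ?ler01. Qed.

Lemma ternary_bound s : 0 <= ternary s <= 1.
Proof.
elim: s => [|c s IH] /=; first by rewrite lexx ler01.
move: IH (bit_bound c) => /andP[? ?] /andP[? ?].
by rewrite divr_ge0 ?ler_pdivrMr //=; lra.
Qed.

Lemma ternary_prefix_mono b n : ternary (prefix b n) <= ternary (prefix b n.+1).
Proof.
elim: n b => [|n IH] b.
  by rewrite prefixS /= divr_ge0 //; have /andP[? _] := bit_bound (b 0%N); lra.
rewrite [prefix b n.+1]prefixS [prefix b n.+2]prefixS /=.
by rewrite ler_pdivrMr // divfK // lerD2r.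
Qed.

Definition cantor_point (b : nat -> bool) : RR :=
  sup (range (fun n => ternary (prefix b n))).

Lemma ternary_prefix_ubound b : has_ubound (range (fun n => ternary (prefix b n))).
Proof. by exists 1 => _ [n _ <-]; have /andP[] := ternary_bound (prefix b n). Qed.

Lemma cantor_point_cvg b : (fun n => ternary (prefix b n)) @ \oo --> cantor_point b.
Proof.
apply: nondecreasing_cvgn; last exact: ternary_prefix_ubound.
exact/nondecreasing_seqP/ternary_prefix_mono.
Qed.

Lemma cantor_point_bound b : 0 <= cantor_point b <= 1.
Proof.
apply/andP; split.
  have -> : 0 = ternary (prefix b 0%N) by [].
  by apply: ub_le_sup; [exact: ternary_prefix_ubound | exists 0%N].
apply: ge_sup; first by exists (ternary (prefix b 0%N)), 0%N.
by move=> _ [n _ <-]; have /andP[] := ternary_bound (prefix b n).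
Qed.

Lemma cantor_pointE b :
  cantor_point b = (cantor_point (shift b) + 2 * (b 0%N : nat)%:R) / 3.
Proof.
have b_cvg := cantor_point_cvg b; rewrite -cvg_shiftS /= in b_cvg.
apply: (@cvg_unique _ (@Rhausdorff RR) _ _ _ _ b_cvg).
have -> : (fun n => ternary (prefix b n.+1)) =
  (fun n => (ternary (prefix (shift b) n) + 2 * (b 0%N : nat)%:R) / 3).
  by apply: funext => n; rewrite prefixS.
apply: cvgMr_tmp; apply: (@cvgD _ RR^o); [exact: cantor_point_cvg|exact: cvg_cst].
Qed.

Lemma cantor_stage_step m x (c : bool) :
  cantor_stage m x -> cantor_stage m.+1 ((x + 2 * (c : nat)%:R) / 3).
Proof. by case: c => xm /=; [right|left]; exists x; rewrite ?mulr1 ?mulr0 ?addr0. Qed.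

Lemma cantor_point_in b : middle_thirds_cantor (cantor_point b).
Proof.
move=> m _; elim: m b => [|m IH] b; first by rewrite /= in_itv /= cantor_point_bound.
by rewrite cantor_pointE; apply: cantor_stage_step.
Qed.

Lemma ternary_in s : middle_thirds_cantor (ternary s).
Proof.
move=> m _; elim: m s => [|m IH] s; first by rewrite /= in_itv /= ternary_bound.
case: s => [|c s]; last exact: cantor_stage_step.
by have := @cantor_stage_step _ _ false (IH [::]); rewrite /= mulr0 addr0 mul0r.
Qed.

(* Distinct digit sequences give distinct points: the digit 0 puts the point
   in [0, 1/3] and the digit 2 in [2/3, 1]. *)
Lemma cantor_point_inj : injective cantor_point.
Proof.
have head_eq b b' : cantor_point b = cantor_point b' -> b 0%N = b' 0%N.
  rewrite cantor_pointE (cantor_pointE b').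
  move: (cantor_point_bound (shift b)) (cantor_point_bound (shift b')).
  by move=> /andP[? ?] /andP[? ?]; case: (b 0%N); case: (b' 0%N) => //=; lra.
move=> b b' bb'; apply: funext => k; elim: k b b' bb' => [|k IH] b b' bb'.
  exact: head_eq.
have b0 := head_eq _ _ bb'; apply: (IH (shift b) (shift b')); move: bb'.
by rewrite cantor_pointE (cantor_pointE b') b0; lra.
Qed.

Lemma continuous_within_coord_ev {T : topologicalType} {A : set T}
    {g : T -> baire} {u : nat -> T} {l : T} :
  {within A, continuous g} -> (forall n, A (u n)) -> A l -> u @ \oo --> l ->
  forall k, exists N, forall n, (N <= n)%N -> g (u n) k = g l k.
Proof.
move=> g_cont uA lA u_l k.
have g_l : g @ within A (nbhs l) --> g l by move/subspace_continuousP : g_cont; apply.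
have u_within : u @ \oo --> within A (nbhs l).
  by move=> W /u_l [N _ uW]; exists N => // n /uW; apply.
have gu_k : (fun n => g (u n) k) @ \oo --> g l k.
  apply: (cvg_trans (cvg_app (proj k) (cvg_trans (cvg_app g u_within) g_l))).
  exact: (@proj_continuous nat (fun _ => nat) k (g l)).
have discrete_nbhs : nbhs (g l k) [set g l k] by [].
by have [N _ gu_N] := gu_k _ discrete_nbhs; exists N => n /gu_N.
Qed.

(* A countable code for a set of points of Baire space: [w] labels the nodes
   of the binary tree, and the coded set consists of the limits of [w] along
   the branches (a limit in Baire space: each coordinate eventually constant).
   Such codes can be enumerated by binary sequences, unlike arbitrary sets. *)
Definition tree_limits (w : seq bool -> baire) : set baire :=
  [set x | exists b : nat -> bool, forall k, exists N, forall n,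
     (N <= n)%N -> w (prefix b n) k = x k].

Definition contains_continuum {T : Type} (A : set T) : Prop :=
  exists phi : (nat -> bool) -> T, injective phi /\ forall b, A (phi b).

(* Every Cantor set in Baire space contains the limits of a tree code which
   itself has continuum many limits: compose the homeomorphism with the
   ternary expansions. *)
Lemma cantor_set_tree_code (C : set baire) : is_cantor_set C ->
  exists w, tree_limits w `<=` C /\ contains_continuum (tree_limits w).
Proof.
move=> [h [g [[_ gK _ gh] [_ g_cont]]]].
have conv b k : exists N, forall n, (N <= n)%N ->
    g (ternary (prefix b n)) k = g (cantor_point b) k.
  apply: (continuous_within_coord_ev g_cont) => //.
  - by move=> n; apply: ternary_in.
  - exact: cantor_point_in.
  - exact: cantor_point_cvg.
exists (fun s => g (ternary s)); split.
  move=> x [b x_lim]; suff -> : x = g (cantor_point b) by apply/gK/cantor_point_in.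
  apply: funext => k; have [N1 H1] := x_lim k; have [N2 H2] := conv b k.
  by rewrite -(H1 (maxn N1 N2)) ?leq_maxl // H2 // leq_maxr.
exists (fun b => g (cantor_point b)); split; last by move=> b; exists b; apply: conv.
by move=> b b' /(congr1 h); rewrite !gh; [exact: cantor_point_inj|exact: cantor_point_in..].
Qed.

(* The indices are
   well-ordered and reindexed so that every stage has fewer than continuum
   predecessors; then a fresh point is always available. *)
Section DistinctRepresentatives.
Variables (J : eqType) (X : Type) (A : J -> set X).
Hypothesis J_le_continuum : exists code : J -> (nat -> bool), injective code.
Hypothesis A_large : forall j, contains_continuum (A j).

Definition wo : rel J := sval (well_ordering_principle J).

Lemma wo_well_order : well_order wo.
Proof. exact: svalP (well_ordering_principle J). Qed.

Lemma wo_chainT : wo_chain wo [pred _ | true].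
Proof. by move=> B _; apply: wo_well_order. Qed.

Lemma wo_total : total wo.
Proof. by move=> x y; apply: (wo_chainW wo_chainT). Qed.

Lemma wo_anti : antisymmetric wo.
Proof. by move=> x y; apply: (wo_chain_antisymmetric wo_chainT). Qed.

Definition before (u v : J) : bool := wo u v && (u != v).

(* A non-accessible element would have a least non-accessible one, all of
   whose predecessors are accessible. *)
Lemma before_wf : well_founded before.
Proof.
move=> v; apply: contrapT => v_nacc.
have [|m [[] + m_min] _] := wo_well_order [pred u | ~~ `[< Acc before u >]].
  by exists v; rewrite inE; apply/asboolPn.
rewrite inE => /asboolPn; apply; constructor => u /andP[u_m u_neq_m].
apply: contrapT => u_nacc.
have m_u : wo m u by apply: m_min; rewrite inE; apply/asboolPn.
by move: u_neq_m; rewrite (@wo_anti u m) ?eqxx // u_m m_u.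
Qed.

Definition small (v : J) : Prop := ~ contains_continuum [set u | before u v].

(* If some element is not
   small, the least such [a] has continuum many predecessors, all small, and
   [J] embeds into them since it embeds into [nat -> bool]. *)
Lemma small_reindexing : exists iota : J -> J, injective iota /\ forall j, small (iota j).
Proof.
have [[a a_big]|all_small] := pselect (exists a, ~ small a); last first.
  by exists id; split => // j; apply: contrapT => j_big; apply: all_small; exists j.
have [|m [[] + m_min] _] := wo_well_order [pred v | `[< ~ small v >]].
  by exists a; rewrite inE.
rewrite inE => /contrapT [phi [phi_inj phi_before]].
have [code code_inj] := J_le_continuum.
exists (phi \o code); split; first exact: inj_comp.
move=> j /= phi_big; have /andP[phi_m phi_neq_m] := phi_before (code j).
have m_phi : wo m (phi (code j)) by apply: m_min; rewrite inE.
by move: phi_neq_m; rewrite (@wo_anti (phi (code j)) m) ?eqxx // phi_m m_phi.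
Qed.

Definition reindex : J -> J := projT1 (cid small_reindexing).

Lemma reindex_inj : injective reindex.
Proof. exact: (projT2 (cid small_reindexing)).1. Qed.

Lemma reindex_small j : small (reindex j).
Proof. exact: (projT2 (cid small_reindexing)).2. Qed.

Definition target (v : J) : set X :=
  if pselect (exists j, reindex j = v) is left h then A (projT1 (cid h)) else set0.

Lemma target_reindex j : target (reindex j) = A j.
Proof.
rewrite /target; case: pselect => [h|]; last by case; exists j.
by case: (cid h) => i /= /reindex_inj ->.
Qed.

Definition fresh (v : J) (E : set X) : option X :=
  if pselect (exists x, target v x /\ ~ E x) is left h then Some (projT1 (cid h))
  else None.

Definition rep_step (v : J) (rec : forall u, before u v -> option X) : option X :=
  fresh v [set x | exists u (h : before u v), rec u h = Some x].

Definition rep_at : J -> option X := Fix before_wf (fun _ => option X) rep_step.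

Lemma rep_atE v :
  rep_at v = fresh v [set x | exists2 u, before u v & rep_at u = Some x].
Proof.
rewrite /rep_at Fix_eq; last first.
  move=> u f g fg; congr fresh; apply: funext => x; apply: propext.
  by split => -[w [h E]]; exists w, h; rewrite ?fg // -fg.
congr fresh; apply: funext => x; apply: propext.
by split => [[u [h E]]|[u h E]]; [exists u | exists u, h].
Qed.

Lemma rep_at_some {v x} : rep_at v = Some x ->
  target v x /\ forall u, before u v -> rep_at u <> Some x.
Proof.
rewrite rep_atE /fresh; case: pselect => [h [<-]|//].
by case: (cid h) => y [vy y_new] /=; split=> // u uv uy; apply: y_new; exists u.
Qed.

Lemma rep_at_inj {u v x} : rep_at u = Some x -> rep_at v = Some x -> u = v.
Proof.
move=> ux vx; apply: contrapT => /eqP u_neq_v.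
have [_ u_new] := rep_at_some ux; have [_ v_new] := rep_at_some vx.
case/orP: (wo_total u v) => [uv|vu].
- by apply: (v_new u); rewrite ?/before ?uv.
- by apply: (u_new v); rewrite ?/before ?vu 1?eq_sym.
Qed.

(* The recursion succeeds at the reindexed stages: the earlier stages are
   fewer than continuum many, so they cannot exhaust the large set [A j]. *)
Lemma rep_at_reindex j : exists x, rep_at (reindex j) = Some x.
Proof.
rewrite rep_atE /fresh target_reindex; case: pselect => [h|none]; first by eexists.
exfalso; apply: (reindex_small j); have [phi [phi_inj phi_A]] := A_large j.
have earlier b : exists u, before u (reindex j) /\ rep_at u = Some (phi b).
  apply: contrapT => phi_new; apply: none; exists (phi b); split=> // -[u ? ?].
  by apply: phi_new; exists u.
have [stage stageP] := choice earlier.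
exists stage; split=> [b b' eq_stage|b]; last by case: (stageP b).
apply: phi_inj; have [_ sb] := stageP b; have [_ sb'] := stageP b'.
by move: sb; rewrite eq_stage sb' => -[].
Qed.

Theorem distinct_representatives : exists p : J -> X, injective p /\ forall j, A j (p j).
Proof.
have [p pP] := choice rep_at_reindex.
exists p; split=> [i j pij|j]; first by apply/reindex_inj/(rep_at_inj (pP i)); rewrite pij.
by have [+ _] := rep_at_some (pP j); rewrite target_reindex.
Qed.

End DistinctRepresentatives.

Lemma no_injection_from_predicates (T : Type) (q : (T -> bool) -> T) : ~ injective q.
Proof.
move=> q_inj.
have left_inv t : exists b, (exists b', q b' = t) -> q b = t.
  have [[b qb]|no_b] := pselect (exists b, q b = t); first by exists b.
  by exists xpred0 => /no_b.
have [r rP] := choice left_inv.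
have r_q b : r (q b) = b by apply: q_inj; apply: rP; exists b.
pose diag t := ~~ r t t.
by have := congr1 (fun b => b (q diag)) (r_q diag); rewrite /diag; case: (r _ _).
Qed.

Lemma contains_continuum_uncountable {T : Type} {A : set T} :
  contains_continuum A -> ~ countable A.
Proof.
move=> [phi [phi_inj phiA]] /countable_injP [q q_inj].
apply: (@no_injection_from_predicates nat (q \o phi)) => b b' /= qb.
by apply/phi_inj/q_inj; rewrite ?inE.
Qed.

Lemma baire_contains_continuum : contains_continuum [set: baire].
Proof.
exists (fun b k => nat_of_bool (b k)); split=> // b b' bb'.
by apply: funext => k; have := congr1 (fun x : baire => x k) bb'; do 2 case: (_ k).
Qed.

Lemma bits_embedding (J : Type) (K : countType) (bits : J -> K -> bool) :
  injective bits -> exists code : J -> nat -> bool, injective code.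
Proof.
move=> bits_inj; exists (fun j m => if unpickle m is Some k then bits j k else false).
move=> i j ij; apply: bits_inj; apply: funext => k.
by have := congr1 (fun c => c (pickle k)) ij; rewrite /= pickleK.
Qed.

Lemma contains_continuum_sub {T : Type} {A B : set T} :
  A `<=` B -> contains_continuum A -> contains_continuum B.
Proof. by move=> AB [phi [phi_inj phiA]]; exists phi; split=> // b; apply/AB. Qed.

(* The stages of the construction: a tree code [w] (standing for a Cantor
   set), a required value [n] of the label, and an index [y] used to make
   continuum many points with this label in the coded set. *)
Definition task := ((seq bool -> baire) * nat * (nat -> bool))%type.

Lemma task_le_continuum : exists code : task -> nat -> bool, injective code.
Proof.
pose bits (i : task) (k : (seq bool * nat * nat) + (nat + nat)) : bool :=
  let: (w, n, y) := i in
  match k with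
  | inl (s, t, m) => w s t == m
  | inr (inl m) => y m
  | inr (inr m) => m == n
  end.
apply: (@bits_embedding _ _ bits) => -[[w n] y] [[w' n'] y'] bits_eq.
have bitsE k : bits (w, n, y) k = bits (w', n', y') k by rewrite bits_eq.
have -> : w = w'.
  apply: funext => s; apply: funext => t.
  by have /= := bitsE (inl (s, t, w s t)); rewrite eqxx => /esym/eqP.
have -> : n = n' by have /= := bitsE (inr (inr n)); rewrite eqxx => /esym/eqP.
by have -> : y = y' by apply: funext => m; have := bitsE (inr (inl m)).
Qed.

Definition task_target (i : task) : set baire :=
  if pselect (contains_continuum (tree_limits i.1.1)) is left _ then tree_limits i.1.1
  else setT.

Lemma task_target_large i : contains_continuum (task_target i).
Proof. by rewrite /task_target; case: pselect => // _; apply: baire_contains_continuum. Qed.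

Definition rep : task -> baire :=
  projT1 (cid (@distinct_representatives _ _ _ task_le_continuum task_target_large)).

Lemma rep_inj : injective rep.
Proof. exact: (projT2 (cid (@distinct_representatives _ _ _ _ _))).1. Qed.

Lemma rep_target i : task_target i (rep i).
Proof. exact: (projT2 (cid (@distinct_representatives _ _ _ _ _))).2. Qed.

Definition label (x : baire) : nat :=
  if pselect (exists i, rep i = x) is left h then (projT1 (cid h)).1.2 else 0%N.

Lemma label_rep i : label (rep i) = i.1.2.
Proof.
rewrite /label; case: pselect => [h|]; last by case; exists i.
by case: (cid h) => j /= /rep_inj ->.
Qed.

(* The payoff: the label, raised by one where it would match Player I's
   strategy [shadow]. *)
Definition payoff (x : baire) : nat :=
  if (label x).+1 == nat_limsup x then (label x).+1 else label x.

Lemma payoff_avoids_limsup x : (payoff x).+1 <> nat_limsup x.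
Proof.
by rewrite /payoff; case: eqP => [<- /succn_inj/esym/n_Sn|].
Qed.

Lemma label_le_payoff x : (label x <= payoff x)%N.
Proof. by rewrite /payoff; case: eqP. Qed.

(* Every Cantor set contains continuum many points of payoff at least [n]:
   the representatives of the tasks [(w, n, y)] for a tree code [w] of it. *)
Lemma payoff_large_on_cantor_sets (C : set baire) (n : nat) : is_cantor_set C ->
  contains_continuum (C `&` [set x | (n <= payoff x)%N]).
Proof.
move=> /cantor_set_tree_code [w [wC w_large]].
exists (fun y => rep (w, n, y)); split=> [y y' /rep_inj [] //|y].
have := rep_target (w, n, y); rewrite /task_target /=; case: pselect => // _ wx.
by split; [apply: wC | have := label_le_payoff (rep (w, n, y)); rewrite label_rep].
Qed.

Theorem mainTheorem13 :
  exists f : baire -> nat,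
    I_has_winning_strategy f /\
    (forall (r : RR) (C : set baire), is_cantor_set C ->
       ~ countable (C `&` [set x | r <= ((f x)%:R : RR)])).
Proof.
exists payoff; split; first exact/shadow_wins/payoff_avoids_limsup.
move=> r C /(payoff_large_on_cantor_sets C (Num.truncn r).+1) large.
apply/contains_continuum_uncountable/(contains_continuum_sub _ large).
move=> x [Cx r_le_x]; split=> //=; apply: ltW (lt_le_trans (truncnS_gt r) _).
by rewrite ler_nat.
Qed.
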